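(* Define, for integers $n,m,p\ge0$, $$\mathcal{Z}_{n,m}(p)=\binom{m+p}{p}\sum_{k=0}^{m}s(m,k)\,\mathcal{B}_{n+k,p}.$$ Then for all integers $n,m,p\ge0$, $$\mathcal{Z}_{n+1,m}(p)=\frac{m+1}{m+p+1}\,\mathcal{Z}_{n,m+1}(p)+m\,\mathcal{Z}_{n,m}(p),$$ and $\mathcal{Z}_{0,m}(p)=1$, $\mathcal{Z}_{n,0}(p)=\mathcal{B}_{n,p}$.
   Context: $s(m,k)$ are the signed Stirling numbers of the first kind, defined by $x(x-1)\cdots(x-m+1)=\sum_{k=0}^m s(m,k)x^k$. For an integer $p\ge0$, the $p$-Bell numbers $\mathcal{B}_{n,p}$ are defined by $\sum_{n\ge0}\mathcal{B}_{n,p}\frac{z^n}{n!}=\sum_{n\ge0}\binom{n+p}{p}^{-1}\frac{(e^z-1)^n}{n!}$. *)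

From mathcomp Require Import all_boot all_order all_algebra.
Set Implicit Arguments. Unset Strict Implicit. Unset Printing Implicit Defensive.
Import GRing.Theory Num.Theory.
Local Open Scope ring_scope.

Definition stirling1 (m k : nat) : int :=
  (\prod_(i < m) ('X - (i%:R)%:P) : {poly int})`_k.

Definition expm1_trunc (N : nat) : {poly rat} :=
  \sum_(1 <= j < N.+1) (j`!%:R)^-1 *: 'X^j.

(* p-Bell numbers: n! times the coefficient of z^n in
   \sum_k binom(k+p,p)^-1 (e^z-1)^k / k!.  Terms with k > n and monomials
   of e^z of degree > n do not contribute to the z^n coefficient, so the
   truncations below are exact. *)
Definition pBell (n p : nat) : rat :=
  n`!%:R *
  (\sum_(k < n.+1) (('C(k + p, p)%:R)^-1 * (k`!%:R)^-1) *: (expm1_trunc n) ^+ k)`_n.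

Definition Zpb (n m p : nat) : rat :=
  'C(m + p, p)%:R * \sum_(k < m.+1) (stirling1 m k)%:~R * pBell (n + k) p.

(* The p-Bell numbers are the values of the linear functional
   L_p : x^k |-> B_{k,p} on monomials, and Z_{n,m}(p) = C(m+p,p) L_p(x^n (x)_m)
   with (x)_m the falling factorial.  The recurrence is the image under L_p of
   x (x)_m = (x)_{m+1} + m (x)_m, combined with
   (m+1) C(m+1+p,p) = (m+p+1) C(m+p,p).  For Z_{0,m}(p) = 1: since
   k! [z^k] (e^z - 1)^j is the j-th forward difference of x^k at 0, one gets
   L_p(q) = sum_j (Delta^j q)(0) / (j! C(j+p,p)), and (Delta^j (x)_m)(0) is
   m! if j = m and 0 for j < m. *)

From mathcomp Require Import all_boot all_order all_algebra zify.
Set Implicit Arguments. Unset Strict Implicit. Unset Printing Implicit Defensive.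
Import GRing.Theory Num.Theory.
Local Open Scope ring_scope.

Section FallingFactorialPoly.
Variable R : comNzRingType.

Definition ffact_poly (m : nat) : {poly R} := \prod_(i < m) ('X - (i%:R)%:P).

Lemma ffact_polyS m : ffact_poly m.+1 = ffact_poly m * ('X - (m%:R)%:P).
Proof. by rewrite /ffact_poly big_ord_recr. Qed.

Lemma size_ffact_poly m : size (ffact_poly m) = m.+1.
Proof. by rewrite /ffact_poly -big_enum size_prod_XsubC size_enum_ord. Qed.

Lemma mulX_ffact_poly m : 'X * ffact_poly m = ffact_poly m.+1 + m%:R *: ffact_poly m.
Proof. by rewrite ffact_polyS mulrBr -mul_polyC mulrC [_ * _%:P]mulrC subrK. Qed.

Lemma horner_ffact_poly_natr m j : (ffact_poly m).[j%:R] = (j ^_ m)%:R.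
Proof.
elim: m => [|m IHm]; first by rewrite /ffact_poly big_ord0 hornerC.
rewrite ffact_polyS hornerM hornerXsubC IHm ffactnSr natrM.
have [lt_jm | le_mj] := ltnP j m; first by rewrite ffact_small // !mul0r.
by rewrite natrB.
Qed.

Definition fdiff (j : nat) (q : {poly R}) : R :=
  \sum_(i < j.+1) ((-1) ^+ i *+ 'C(j, i)) * q.[(j - i)%:R].

Lemma fdiff_coef_wide N j (q : {poly R}) :
  (size q <= N)%N -> fdiff j q = \sum_(k < N) q`_k * fdiff j 'X^k.
Proof.
move=> le_qN; under [RHS]eq_bigr do rewrite mulr_sumr.
rewrite exchange_big; apply: eq_bigr => i _ /=.
rewrite (horner_coef_wide _ le_qN) mulr_sumr; apply: eq_bigr => k _.
by rewrite hornerXn mulrCA.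
Qed.

Lemma fdiff_ffact_poly_lt j m : (j < m)%N -> fdiff j (ffact_poly m) = 0.
Proof.
move=> lt_jm; apply: big1 => i _.
by rewrite horner_ffact_poly_natr ffact_small ?mulr0 // (leq_ltn_trans (leq_subr _ _)).
Qed.

Lemma fdiff_ffact_poly_diag m : fdiff m (ffact_poly m) = m`!%:R.
Proof.
rewrite /fdiff big_ord_recl /= subn0 horner_ffact_poly_natr ffactnn bin0 mul1r.
rewrite big1 ?addr0 // => i _.
by rewrite horner_ffact_poly_natr ffact_small ?mulr0 // /bump /= add1n subnSK ?leq_subr.
Qed.

End FallingFactorialPoly.

Lemma map_ffact_poly (R S : comNzRingType) (f : {rmorphism R -> S}) m :
  map_poly f (ffact_poly R m) = ffact_poly S m.
Proof.
rewrite rmorph_prod; apply: eq_bigr => i _.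
by rewrite rmorphB /= map_polyX map_polyC /= rmorph_nat.
Qed.

Lemma stirling1E (R : comNzRingType) m k : (stirling1 m k)%:~R = (ffact_poly R m)`_k.
Proof. by rewrite -[stirling1 m k]/((ffact_poly _ m)`_k) -coef_map map_ffact_poly. Qed.

Lemma coef_expr_lt (R : nzRingType) (q : {poly R}) j k :
  q`_0 = 0 -> (k < j)%N -> (q ^+ j)`_k = 0.
Proof.
move=> q0; elim: j k => [|j IHj] k // lt_kj.
rewrite exprS coefM big1 // => -[[|l] /= lt_lk] _; first by rewrite q0 mul0r.
by rewrite IHj ?mulr0 //; lia.
Qed.

Section TruncatedExponential.
Variable R : numFieldType.

Definition exp_trunc (M : nat) : {poly R} := \poly_(j < M.+1) (j`!%:R)^-1.

Lemma natr_fact_neq0 k : (k`!%:R : R) != 0.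
Proof. by rewrite pnatr_eq0 -lt0n fact_gt0. Qed.

Lemma coef_exp_trunc M k : (k <= M)%N -> (exp_trunc M)`_k = (k`!%:R)^-1.
Proof. by move=> le_kM; rewrite coef_poly ltnS le_kM. Qed.

Lemma mul_inv_fact_bin k j :
  (j <= k)%N -> (j`!%:R)^-1 * ((k - j)`!%:R)^-1 = 'C(k, j)%:R / k`!%:R :> R.
Proof.
move=> le_jk; have nz_bin : ('C(k, j)%:R : R) != 0 by rewrite pnatr_eq0 -lt0n bin_gt0.
by rewrite -(bin_fact le_jk) !natrM [in RHS]invfM mulVKf // invfM.
Qed.

Lemma coef_exp_trunc_expr M i k :
  (k <= M)%N -> ((exp_trunc M) ^+ i)`_k = i%:R ^+ k / k`!%:R.
Proof.
elim: i k => [|i IHi] k le_kM.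
  by rewrite expr0 coefC; case: k {le_kM} => [|k]; rewrite ?invr1 ?mulr1 // expr0n mul0r.
rewrite exprSr coefM -nat1r exprDn mulr_suml; apply: eq_bigr => -[j /=] lt_jk _.
rewrite ltnS in lt_jk.
rewrite IHi ?(leq_trans lt_jk) // coef_exp_trunc ?(leq_trans (leq_subr _ _)) //.
by rewrite expr1n mul1r -mulrA mul_inv_fact_bin // mulrA mulr_natr.
Qed.

Lemma coef_exp_trunc_subr1_expr M j k :
  (k <= M)%N -> ((exp_trunc M - 1) ^+ j)`_k = fdiff j ('X^k : {poly R}) / k`!%:R.
Proof.
move=> le_kM; rewrite exprDn coef_sum /fdiff mulr_suml; apply: eq_bigr => i _.
rewrite coefMn -polyC1 -polyCN -rmorphXn coefMC coef_exp_trunc_expr //.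
by rewrite hornerXn -mulrnAr [LHS]mulrC mulrA.
Qed.

(* [(e^z - 1)^j] has no monomial of degree below [j]. *)
Lemma fdiff_Xn_lt j k : (k < j)%N -> fdiff j ('X^k : {poly R}) = 0.
Proof.
move=> lt_kj; have /esym := coef_exp_trunc_subr1_expr j (leqnn k).
rewrite coef_expr_lt //; last by rewrite coefB coef_exp_trunc // coefC invr1 subrr.
by move/(congr1 ( *%R^~ k`!%:R)); rewrite mul0r divfK ?natr_fact_neq0.
Qed.

End TruncatedExponential.

Lemma expm1_truncE M : expm1_trunc M = exp_trunc rat M - 1.
Proof.
rewrite /exp_trunc poly_def big_ord_recl /= fact0 invr1 scale1r addrAC subrr add0r.
by rewrite /expm1_trunc big_add1 big_mkord.
Qed.

Section PBellUmbra.
Variable p : nat.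
Implicit Types q r : {poly rat}.

Definition pBell_weight (j : nat) : rat := ('C(j + p, p)%:R)^-1 * (j`!%:R)^-1.

Lemma pBell_fdiff N k :
  (k < N)%N -> pBell k p = \sum_(j < N) pBell_weight j * fdiff j 'X^k.
Proof.
move=> lt_kN; transitivity (\sum_(j < k.+1) pBell_weight j * fdiff j 'X^k).
  rewrite /pBell expm1_truncE coef_sum mulr_sumr; apply: eq_bigr => j _.
  rewrite coefZ coef_exp_trunc_subr1_expr //.
  by rewrite mulrCA [k`!%:R * _]mulrCA mulfV ?natr_fact_neq0 ?mulr1.
rewrite (big_ord_widen N (fun j => pBell_weight j * fdiff j 'X^k) lt_kN).
rewrite big_mkcond; apply: eq_bigr => j _.
by case: ltnP => // le_kj; rewrite fdiff_Xn_lt ?mulr0.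
Qed.

Definition pBell_umbra q : rat :=
  \sum_(k < size q) q`_k * pBell k p.

Lemma pBell_umbra_wide N q :
  (size q <= N)%N -> pBell_umbra q = \sum_(k < N) q`_k * pBell k p.
Proof.
move=> le_qN; rewrite /pBell_umbra (big_ord_widen N (fun k => q`_k * pBell k p)) //.
rewrite big_mkcond; apply: eq_bigr => k _.
by case: ltnP => // /(nth_default 0) ->; rewrite mul0r.
Qed.

Lemma pBell_umbraD q r : pBell_umbra (q + r) = pBell_umbra q + pBell_umbra r.
Proof.
have le_q := leq_maxl (size q) (size r); have le_r := leq_maxr (size q) (size r).
rewrite !(@pBell_umbra_wide (maxn (size q) (size r))) ?(leq_trans (size_polyD _ _)) //.
by rewrite -big_split; apply: eq_bigr => k _; rewrite coefD mulrDl.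
Qed.

Lemma pBell_umbraZ c q : pBell_umbra (c *: q) = c * pBell_umbra q.
Proof.
rewrite !(@pBell_umbra_wide (size q)) ?size_scale_leq // mulr_sumr.
by apply: eq_bigr => k _; rewrite coefZ mulrA.
Qed.

Lemma pBell_umbra_mulXn N n q : (size q <= N)%N ->
  pBell_umbra ('X^n * q) = \sum_(k < N) q`_k * pBell (n + k) p.
Proof.
move=> le_qN; rewrite (@pBell_umbra_wide (n + N)); last first.
  by rewrite (leq_trans (size_polyMleq _ _)) // size_polyXn leq_add2l.
rewrite big_split_ord /= big1 ?add0r => [|k _]; last by rewrite coefXnM ltn_ord mul0r.
by apply: eq_bigr => k _; rewrite coefXnM ltnNge leq_addr addKn.
Qed.

Lemma pBell_umbra_fdiff N q : (size q <= N)%N ->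
  pBell_umbra q = \sum_(j < N) pBell_weight j * fdiff j q.
Proof.
move=> le_qN; rewrite (pBell_umbra_wide le_qN).
under eq_bigr => k _ do rewrite (pBell_fdiff (ltn_ord k)) mulr_sumr.
rewrite exchange_big; apply: eq_bigr => j _ /=.
by rewrite (fdiff_coef_wide j le_qN) mulr_sumr; apply: eq_bigr => k _; rewrite mulrCA.
Qed.

Lemma pBell_umbra_ffact_poly m :
  pBell_umbra (ffact_poly rat m) = ('C(m + p, p)%:R)^-1.
Proof.
rewrite (@pBell_umbra_fdiff m.+1) ?size_ffact_poly // big_ord_recr /=.
rewrite big1 ?add0r => [|j _]; last by rewrite fdiff_ffact_poly_lt ?mulr0.
by rewrite fdiff_ffact_poly_diag divfK ?natr_fact_neq0.
Qed.

Lemma Zpb_umbra n m :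
  Zpb n m p = 'C(m + p, p)%:R * pBell_umbra ('X^n * ffact_poly rat m).
Proof.
rewrite (@pBell_umbra_mulXn m.+1) ?size_ffact_poly //; congr (_ * _).
by apply: eq_bigr => k _; rewrite stirling1E.
Qed.

End PBellUmbra.

Lemma mul_bin_addS m p : ('C(m + p, p) * (m + p).+1 = m.+1 * 'C(m.+1 + p, p))%N.
Proof. by rewrite mulnC (mul_bin_down (m + p).+1) subSn ?leq_addl // addnK. Qed.

Theorem mainTheorem9 :
  forall n m p : nat,
    Zpb n.+1 m p = (m.+1%:R / (m + p).+1%:R) * Zpb n m.+1 p + m%:R * Zpb n m p /\
    Zpb 0 m p = 1 /\
    Zpb n 0 p = pBell n p.
Proof.
move=> n m p; split; [|split].
- rewrite !Zpb_umbra exprSr -mulrA mulX_ffact_poly mulrDr -scalerAr.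
  rewrite pBell_umbraD pBell_umbraZ mulrDr; congr (_ + _); last exact: mulrCA.
  rewrite mulrA; congr (_ * _).
  by rewrite mulrAC -natrM -mul_bin_addS natrM mulfK ?pnatr_eq0.
- rewrite Zpb_umbra expr0 mul1r pBell_umbra_ffact_poly mulfV //.
  by rewrite pnatr_eq0 -lt0n bin_gt0 leq_addl.
- by rewrite /Zpb big_ord1 /stirling1 big_ord0 coefC addn0 add0n binn !mul1r.
Qed.
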